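(* Let $\pi$ be an $R[G_n]$-module and $1\le k\le n$. Then $(\pi^{(k,\psi_R)})^\vee\cong(\pi^\vee)^{(k,\psi_R^{-1})}$.
   Context: Let $p$ be a prime, $q$ a power of $p$, $G_n=\mathrm{GL}_n(\mathbb{F}_q)$, $R$ a commutative Noetherian $\mathbb{Z}[\frac1p,\zeta_p]$-algebra, $\psi:(\mathbb{F}_q,+)\to\mathbb{Z}[\frac1p,\zeta_p]^\times$ nontrivial, $\psi_R$ its image in $R^\times$. $(-)^\vee$ is the $R$-linear dual with contragredient action. For a character $\chi\in\{\psi_R,\psi_R^{-1}\}$: $P_n$ is the mirabolic subgroup (last row $(0,\dots,0,1)$), $U_n=\{\begin{psmallmatrix}I_{n-1}&y\\0&1\end{psmallmatrix}\}$ with character $\chi(y_{n-1})$; for an $R[P_n]$-module $V$, $\Phi^-_\chi(V)=V/\langle uv-\chi(u)v:u\in U_n\rangle$ (an $R[P_{n-1}]$-module) and $\Psi^-(V)=V/\langle uv-v:u\in U_n\rangle$ (an $R[G_{n-1}]$-module); $\pi^{(k,\chi)}=\Psi^-(\Phi^-_\chi)^{k-1}(\pi|_{P_n})$, an $R[G_{n-k}]$-module. *)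

From HB Require Import structures.
From mathcomp Require Import all_boot all_order all_algebra all_field.
From mathcomp Require Import boolp classical_sets functions.
Set Implicit Arguments.
Unset Strict Implicit.
Unset Printing Implicit Defensive.
Import GRing.Theory.
Local Open Scope ring_scope.

Section Defs.
Variables (F : finFieldType) (R : comPzRingType).

Definition is_ideal (I : R -> Prop) : Prop :=
  [/\ I 0, (forall x y, I x -> I y -> I (x + y)) & (forall a x, I x -> I (a * x))].

Definition noetherian_ring : Prop :=
  forall I : R -> Prop, is_ideal I ->
    exists s : seq R, forall x, I x <->
      exists c : 'I_(size s) -> R, x = \sum_(i < size s) c i * s`_i.

(** A Z[1/p, zeta_p]-algebra structure on R, i.e. (since
    Z[1/p,zeta_p] = Z[x, 1/p]/(Phi_p(x)) for p prime) the image zeta of zeta_p,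
    which is a root of Phi_p = 1 + x + ... + x^(p-1), with p invertible in R. *)
Definition Zp_zeta_algebra (p : nat) (zeta : R) : Prop :=
  (exists r : R, p%:R * r = 1) /\ \sum_(i < p) zeta ^+ i = 0.

(** Image psi_R in R of the character psi : (F,+) -> Z[1/p,zeta_p]^x.
    Any such character takes values in the p-th roots of unity zeta_p^j,
    hence is a -> zeta_p ^ (f a) for an additive f : F -> Z/p; psi is
    nontrivial iff f is. *)
Definition psiR (p : nat) (zeta : R) (f : F -> 'Z_p) (a : F) : R :=
  zeta ^+ (f a : nat).

Definition psiR_inv (p : nat) (zeta : R) (f : F -> 'Z_p) (a : F) : R :=
  psiR zeta f (- a).

Definition is_GLrep (n : nat) (V : lmodType R) (rho : 'M[F]_n -> V -> V) : Prop :=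
  [/\ (forall g, g \in unitmx -> forall (a : R) (u v : V),
          rho g (a *: u + v) = a *: rho g u + rho g v),
      (forall v, rho 1%:M v = v) &
      (forall g h, g \in unitmx -> h \in unitmx ->
          forall v, rho (g *m h) v = rho g (rho h v))].

(** Entry (i,j) of an m x m matrix, indices as naturals (0 outside range). *)
Definition mx_at (m : nat) (g : 'M[F]_m) (i j : nat) : F :=
  match (insub i : option 'I_m), (insub j : option 'I_m) with
  | Some i', Some j' => g i' j'
  | _, _ => 0
  end.

Definition emb_mx (n m : nat) (g : 'M[F]_m) : 'M[F]_n :=
  \matrix_(i < n, j < n)
    (if (i < m)%N && (j < m)%N then mx_at g i j else (i == j)%:R).

(** The element (I_(m-1), y; 0, 1) of U_m <= P_m <= G_m, embedded in G_n,
    where y = (y 0, ..., y (m-2)) in F^(m-1). *)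
Definition unip_mx (n m : nat) (y : nat -> F) : 'M[F]_n :=
  \matrix_(i < n, j < n)
    ((i == j)%:R + (if (j == m.-1 :> nat) && (i < m.-1)%N then y (nat_of_ord i) else 0)).

Definition rspan (M : lmodType R) (S : M -> Prop) (x : M) : Prop :=
  exists (s : seq M) (c : 'I_(size s) -> R),
    (forall i, (i < size s)%N -> S s`_i) /\ x = \sum_(i < size s) c i *: s`_i.

(** Generators u v - chi(u) v  (u in U_m, v in the module C), where the
    character of U_m is u(y) |-> chi (y_(m-1)), i.e. chi of the last entry
    (0-based index m-2) of y. *)
Definition rel_gens (M : lmodType R) (C : M -> Prop) (n : nat)
    (act : 'M[F]_n -> M -> M) (m : nat) (chi : F -> R) (x : M) : Prop :=
  exists (y : nat -> F) (v : M), C v /\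
    x = act (unip_mx n m y) v - chi (y m.-2) *: v.

(** Generators of the kernel of V -> (Phi^-_chi)^j (V), V an R[P_n]-module:
    the j-th step (0-based j') uses U_(n-j'). *)
Fixpoint phi_gens (M : lmodType R) (C : M -> Prop) (n : nat)
    (act : 'M[F]_n -> M -> M) (chi : F -> R) (j : nat) : M -> Prop :=
  match j with
  | 0 => fun _ => False
  | j'.+1 => fun x => phi_gens C act chi j' x \/ rel_gens C act (n - j') chi x
  end.

(** Kernel W_k of C ->> pi^(k,chi) = Psi^- (Phi^-_chi)^(k-1) (pi|_(P_n)):
    iterated quotients of C are quotients of C by a sum of submodules,
    so pi^(k,chi) = C / deriv_sub C act chi k, with G_(n-k) acting through
    emb_mx n (n-k). *)
Definition deriv_sub (M : lmodType R) (C : M -> Prop) (n : nat)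
    (act : 'M[F]_n -> M -> M) (chi : F -> R) (k : nat) : M -> Prop :=
  rspan (fun x => phi_gens C act chi k.-1 x \/
                  rel_gens C act (n - k.-1) (fun _ => 1) x).

Definition lin_form (V : lmodType R) (l : V -> R^o) : Prop :=
  forall (a : R) (u v : V), l (a *: u + v) = a * l u + l v.

Definition dual_act (V : lmodType R) (n : nat) (rho : 'M[F]_n -> V -> V)
    (g : 'M[F]_n) (l : V -> R^o) : V -> R^o :=
  fun v => l (rho (invmx g) v).

(** (pi^(k,chi))^vee = linear forms on V vanishing on W_k. *)
Definition dual_of_deriv (V : lmodType R) (n : nat) (rho : 'M[F]_n -> V -> V)
    (chi : F -> R) (k : nat) (l : V -> R^o) : Prop :=
  lin_form l /\ forall v, deriv_sub (fun _ => True) rho chi k v -> l v = 0.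

(** Isomorphism of R[G_(n-k)]-modules
      (pi^(k,chi))^vee  ~=  (pi^vee)^(k,chi') = V^vee / W'_k ,
    expressed as an R-linear, G_(n-k)-equivariant map Phi from V^vee onto
    (pi^(k,chi))^vee whose kernel is exactly W'_k. *)
Definition dual_deriv_iso (V : lmodType R) (n : nat) (rho : 'M[F]_n -> V -> V)
    (chi chi' : F -> R) (k : nat) : Prop :=
  exists Phi : (V -> R^o) -> (V -> R^o),
    [/\ (forall l, lin_form l -> dual_of_deriv rho chi k (Phi l)),
        (forall (a : R) l h, lin_form l -> lin_form h ->
           Phi (a *: l + h) = a *: Phi l + Phi h),
        (forall (g : 'M[F]_(n - k)) l, g \in unitmx -> lin_form l ->
           Phi (dual_act rho (emb_mx n g) l) = dual_act rho (emb_mx n g) (Phi l)),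
        (forall l', dual_of_deriv rho chi k l' ->
           exists l, lin_form l /\ Phi l = l') &
        (forall l, lin_form l ->
           (Phi l = 0 <-> deriv_sub (@lin_form V) (dual_act rho) chi' k l))].

End Defs.

(* Put a = n - k and let N be the group of upper unitriangular matrices that
   agree with the identity in their first a columns.  It is generated by the
   embedded groups U_(a+1), ..., U_n, and theta(M) = chi (sum_(j > a) M_(j-1,j))
   is a character of N restricting to the characters used to define
   pi^(k,chi); hence the kernel of pi ->> pi^(k,chi) is spanned by the vectors
   M v - theta(M) v with M in N.  As |N| is a power of p, it is invertible in R
   and e = |N|^-1 sum_M theta(M^-1) M is an operator whose kernel is exactly
   that span and which fixes v modulo it; e commutes with G_(n-k), which
   normalises N and fixes theta.  Then l |-> l o e maps pi^vee onto
   (pi^(k,psi))^vee, and l o e is the same average of l for the contragredient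
   action and the character M |-> theta(M^-1), which is the character built
   from psi^-1; so its kernel is the kernel of pi^vee ->> (pi^vee)^(k,psi^-1). *)

From HB Require Import structures.
From mathcomp Require Import all_boot all_order all_algebra all_field.
From mathcomp Require Import boolp classical_sets functions.
From mathcomp Require abelian.
From mathcomp Require Import zify.
Set Implicit Arguments.
Unset Strict Implicit.
Unset Printing Implicit Defensive.
Import GRing.Theory.
Local Open Scope ring_scope.

Section LinearFor.
Variables (R : pzRingType) (U V : lmodType R) (f : U -> V).
Hypothesis fL : linear f.

Lemma lin0 : f 0 = 0.
Proof. by rewrite -(subrr (0 : U)) (zmod_morphism_linear fL) subrr. Qed.

Lemma linD u v : f (u + v) = f u + f v.
Proof. by have := fL 1 u v; rewrite !scale1r. Qed.

Lemma linZ a u : f (a *: u) = a *: f u.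
Proof. by have := fL a u 0; rewrite !addr0 lin0 addr0. Qed.

Lemma linB u v : f (u - v) = f u - f v.
Proof. by rewrite -scaleN1r linD linZ scaleN1r. Qed.

Lemma lin_sum (I : finType) (P : pred I) (F : I -> U) :
  f (\sum_(i | P i) F i) = \sum_(i | P i) f (F i).
Proof. exact: (big_morph f linD lin0). Qed.

End LinearFor.

Section Span.
Variables (R : comPzRingType) (M : lmodType R) (S : M -> Prop).

Lemma rspan0 : rspan S 0.
Proof. by exists [::], (fun _ => 0); split=> //; rewrite big_ord0. Qed.

Lemma rspan_cons g x a : S g -> rspan S x -> rspan S (a *: g + x).
Proof.
move=> Sg [s [c [Ss ->]]].
exists (g :: s), (fun i => if unlift ord0 i is Some j then c j else a); split.
  by case=> [|i] //= /Ss.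
rewrite big_ord_recl unlift_none; congr (_ + _).
by apply: eq_bigr => i _; rewrite liftK.
Qed.

Lemma rspan_gen x : S x -> rspan S x.
Proof. by move=> Sx; rewrite -[x]addr0 -[x]scale1r; apply: rspan_cons rspan0. Qed.

Lemma rspan_add x y : rspan S x -> rspan S y -> rspan S (x + y).
Proof.
case=> s [c [Ss ->]] Sy; elim: s c Ss => [|g s IH] c Ss; first by rewrite big_ord0 add0r.
rewrite big_ord_recl -addrA; apply: rspan_cons; first exact: (Ss 0%N).
by apply: IH => i; apply: (Ss i.+1).
Qed.

Lemma rspan_scale a x : rspan S x -> rspan S (a *: x).
Proof.
case=> s [c [Ss ->]]; exists s, (fun i => a * c i); split=> //.
by rewrite scaler_sumr; apply: eq_bigr => i _; rewrite scalerA.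
Qed.

Lemma rspan_sum (I : finType) (P : pred I) (F : I -> M) :
  (forall i, P i -> rspan S (F i)) -> rspan S (\sum_(i | P i) F i).
Proof. by move=> SF; apply: (big_ind (rspan S)) => //; [apply: rspan0 | apply: rspan_add]. Qed.

Lemma linear_rspan_eq0 (Y : lmodType R) (f : M -> Y) x :
  linear f -> (forall y, S y -> f y = 0) -> rspan S x -> f x = 0.
Proof.
move=> fL fS [s [c [Ss ->]]]; rewrite lin_sum // big1 // => i _.
by rewrite linZ // fS ?scaler0 //; apply: Ss.
Qed.

End Span.

Lemma rspan_trans (R : comPzRingType) (M : lmodType R) (S T : M -> Prop) x :
  (forall y, S y -> rspan T y) -> rspan S x -> rspan T x.
Proof.
move=> ST [s [c [Ss ->]]]; apply: rspan_sum => i _.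
by apply: rspan_scale; apply/ST/Ss.
Qed.

Lemma invmx_eq (F : comUnitRingType) (n : nat) (A B : 'M[F]_n) :
  A *m B = 1%:M -> invmx A = B.
Proof.
by move=> AB; have [UA _] := mulmx1_unit AB; rewrite -[B]mul1mx -(mulVmx UA) -mulmxA AB mulmx1.
Qed.

Lemma invmxM (F : comUnitRingType) (n : nat) (A B : 'M[F]_n) :
  A \in unitmx -> B \in unitmx -> invmx (A *m B) = invmx B *m invmx A.
Proof. by move=> UA UB; apply: invmx_eq; rewrite -mulmxA (mulmxA B) mulmxV // mul1mx mulmxV. Qed.

Section is_GLaction.
Variables (F : finFieldType) (R : comPzRingType) (n : nat).

(* [C] selects where the action is studied: all of V, or the linear forms
   among the functions V -> R. *)
Definition is_GLaction (X : lmodType R) (C : X -> Prop) (act : 'M[F]_n -> X -> X) :=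
  [/\ {in unitmx, forall g, linear (act g)}, (forall x, act 1%:M x = x),
      {in unitmx &, forall g h x, act (g *m h) x = act g (act h x)} &
      {in unitmx, forall g x, C x -> C (act g x)}].

Variables (V : lmodType R) (rho : 'M[F]_n -> V -> V).
Hypothesis rhoP : is_GLrep rho.

Lemma is_GLaction_rep : is_GLaction (fun=> True) rho.
Proof. by case: rhoP => rhoL rho1 rhoM; split=> // g h Ug Uh; apply: rhoM. Qed.

Lemma is_GLaction_dual : is_GLaction (@lin_form R V) (dual_act rho).
Proof.
case: rhoP => rhoL rho1 rhoM; split.
- by move=> g _ a l h; apply/funext.
- by move=> l; apply/funext => v; rewrite /dual_act invmx1 rho1.
- move=> g h Ug Uh l; apply/funext => v.
  by rewrite /dual_act invmxM // rhoM ?unitmx_inv.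
- by move=> g Ug l lL a u v; rewrite /dual_act rhoL ?unitmx_inv // lL.
Qed.

End is_GLaction.

Definition twisted_gens (F : finFieldType) (R : comPzRingType) (n : nat)
    (X : lmodType R) (C : X -> Prop) (act : 'M[F]_n -> X -> X)
    (theta : 'M[F]_n -> R) (P : 'M[F]_n -> Prop) (x : X) : Prop :=
  exists g w, [/\ P g, C w & x = act g w - theta g *: w].

Lemma reindex_in_set (T : finType) (X : nmodType) (A : {set T}) (h : T -> T) (G : T -> X) :
  {in A &, injective h} -> {in A, forall x, h x \in A} ->
  \sum_(x in A) G (h x) = \sum_(x in A) G x.
Proof.
move=> h_inj hA; rewrite -(big_imset G h_inj) /=; suff -> : h @: A = A by [].
apply/eqP; rewrite eqEcard card_in_imset // leqnn andbT.
by apply/fintype.subsetP => _ /imsetP[x xA ->]; apply: hA.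
Qed.

(** * Twisted averaging over a finite group of matrices *)

Record twisted_avg_data (F : finFieldType) (n : nat) (R : comPzRingType)
    (N : {set 'M[F]_n}) (theta : 'M[F]_n -> R) (c : R) : Prop := TwistedAvgData {
  avg_unit : {subset N <= unitmx};
  avg_groupM : {in N &, forall g h, g *m h \in N};
  avg_groupV : {in N, forall g, invmx g \in N};
  avg_char1 : theta 1%:M = 1;
  avg_charM : {in N &, {morph theta : g h / g *m h >-> g * h}};
  avg_card : c * #|N|%:R = 1
}.

Section TwistedAverage.
Variables (F : finFieldType) (n : nat) (R : comPzRingType).
Local Notation MF := 'M[F]_n.
Variables (N : {set MF}) (theta : MF -> R) (c : R).
Hypothesis NP : twisted_avg_data N theta c.
Let N_unit := avg_unit NP.
Let NM := avg_groupM NP.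
Let NV := avg_groupV NP.
Let theta1 := avg_char1 NP.
Let thetaM := avg_charM NP.
Let cN := avg_card NP.

Lemma theta_invmx g : g \in N -> theta (invmx g) * theta g = 1.
Proof. by move=> Ng; rewrite -thetaM ?NV // mulVmx ?theta1 ?N_unit. Qed.

Lemma reindex_mulr g (Y : nmodType) (G : MF -> Y) : g \in N ->
  \sum_(h in N) G (h *m g) = \sum_(h in N) G h.
Proof.
move=> Ng; apply: reindex_in_set => [h1 h2 _ _|h Nh]; last exact: NM.
by move/(congr1 (mulmx^~ (invmx g))); rewrite !mulmxK ?N_unit.
Qed.

Lemma reindex_invmx (Y : nmodType) (G : MF -> Y) : \sum_(h in N) G (invmx h) = \sum_(h in N) G h.
Proof.
apply: reindex_in_set => [h1 h2 _ _|h Nh]; last exact: NV.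
by move/(congr1 invmx); rewrite !invmxK.
Qed.

Lemma reindex_conj E (Y : nmodType) (G : MF -> Y) : E \in unitmx ->
  {in N, forall g, E *m g *m invmx E \in N} ->
  \sum_(h in N) G (E *m h *m invmx E) = \sum_(h in N) G h.
Proof.
move=> UE NE; apply: reindex_in_set => // h1 h2 _ _.
by move/(congr1 (fun g => invmx E *m g *m E)); rewrite !mulmxA mulVmx // !mul1mx !mulmxKV.
Qed.

Section Action.
Variables (X : lmodType R) (C : X -> Prop) (act : MF -> X -> X).
Hypothesis actP : is_GLaction C act.

Definition twisted_avg (x : X) : X := c *: \sum_(g in N) theta (invmx g) *: act g x.

Lemma twisted_avg_linear : linear twisted_avg.
Proof.
case: actP => actL _ _ _ a x y.
rewrite /twisted_avg scalerA [a * c]mulrC -scalerA -scalerDr; congr (_ *: _).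
rewrite scaler_sumr -big_split; apply: eq_bigr => g Ng.
by rewrite actL ?N_unit // scalerDr !scalerA mulrC.
Qed.

Lemma twisted_avg_act g x : g \in N -> twisted_avg (act g x) = theta g *: twisted_avg x.
Proof.
case: actP => _ _ actM _ Ng.
rewrite /twisted_avg [RHS]scalerA [_ * c]mulrC -[RHS]scalerA; apply: f_equal.
rewrite scaler_sumr -[RHS](reindex_mulr _ Ng); apply: eq_bigr => h Nh.
rewrite actM ?N_unit // scalerA invmxM ?N_unit // thetaM ?NV //.
by rewrite mulrA [theta g * _]mulrC theta_invmx // mul1r.
Qed.

Lemma twisted_avg_conj E x : E \in unitmx ->
  {in N, forall g, E *m g *m invmx E \in N} ->
  {in N, forall g, theta (E *m g *m invmx E) = theta g} ->
  twisted_avg (act E x) = act E (twisted_avg x).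
Proof.
case: actP => actL _ actM _ UE NE thetaE; have EL := actL E UE.
rewrite /twisted_avg (linZ EL) (lin_sum EL); apply: f_equal.
rewrite -[LHS](reindex_conj _ UE NE); apply: eq_bigr => h Nh; have Uh := N_unit Nh.
have UEhE : E *m h *m invmx E \in unitmx by rewrite !unitmx_mul unitmx_inv UE Uh.
have -> : invmx (E *m h *m invmx E) = E *m invmx h *m invmx E.
  by apply: invmx_eq; rewrite !mulmxA mulmxKV // mulmxK // mulmxV.
by rewrite (linZ EL) -!actM // mulmxKV // thetaE ?NV.
Qed.

Local Notation gensN := (twisted_gens C act theta (fun g => g \in N)).

Lemma rspan_sub_twisted_avg x : C x -> rspan gensN (x - twisted_avg x).
Proof.
move=> Cx; have avg_x : x = c *: \sum_(g in N) theta (invmx g) *: (theta g *: x).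
  rewrite (eq_bigr (fun=> x)) => [|g Ng]; last by rewrite scalerA theta_invmx // scale1r.
  by rewrite sumr_const -scaler_nat scalerA cN scale1r.
rewrite {1}avg_x /twisted_avg -scalerBr -sumrB; apply: rspan_scale; apply: rspan_sum => g Ng.
rewrite -scalerBr -[_ - act g x]opprB -scaleN1r.
by do 2 apply: rspan_scale; apply: rspan_gen; exists g, x.
Qed.

Lemma twisted_avg_eq0 x : C x -> twisted_avg x = 0 <-> rspan gensN x.
Proof.
move=> Cx; split=> [tx0|]; first by have := rspan_sub_twisted_avg Cx; rewrite tx0 subr0.
apply: linear_rspan_eq0 twisted_avg_linear _ => _ [g [w [Ng _ ->]]].
have avgL := twisted_avg_linear.
by rewrite -scaleNr (linD avgL) (linZ avgL) twisted_avg_act // scaleNr subrr.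
Qed.

End Action.
End TwistedAverage.

Lemma twisted_avg_dual (F : finFieldType) (n : nat) (R : comPzRingType) (N : {set 'M[F]_n})
    (theta theta' : 'M[F]_n -> R) (c : R) (V : lmodType R) (rho : 'M[F]_n -> V -> V)
    (l : V -> R^o) :
  twisted_avg_data N theta c -> {in N, forall g, theta' g = theta (invmx g)} ->
  lin_form l ->
  twisted_avg N theta' c (dual_act rho) l = (fun v => l (twisted_avg N theta c rho v)).
Proof.
move=> NP theta'E lL; apply/funext => v.
rewrite /twisted_avg (linZ lL) (lin_sum lL) scalrfctE fct_sumE /=.
rewrite -(reindex_invmx NP); apply: congr1; apply: eq_bigr => g Ng.
by rewrite scalrfctE /dual_act !invmxK theta'E ?(avg_groupV NP) // (linZ lL).
Qed.

Lemma sum_if_eq (X : nmodType) (m : nat) (i0 : 'I_m) (x : X) :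
  \sum_(i < m) (if i == i0 then x else 0) = x.
Proof. by rewrite -big_mkcond big_pred1_eq. Qed.

Lemma ord_ltn_eqF (m : nat) (i j : 'I_m) : (i < j)%N -> (i == j) = false.
Proof. by move=> lt_ij; apply/eqP => eq_ij; rewrite eq_ij ltnn in lt_ij. Qed.

Lemma mx_at_ord (F : finFieldType) (m : nat) (A : 'M[F]_m) (i j : 'I_m) : mx_at A i j = A i j.
Proof. by rewrite /mx_at !valK. Qed.

(** * The unipotent group N *)

Section UnipotentTail.
Variables (F : finFieldType) (n a : nat).
Local Notation MF := 'M[F]_n.
Implicit Types (M A : MF) (y : nat -> F).

(* The product U_(a+1) ... U_n of the paper, a = n - k. *)
Definition unip_tail : {set MF} :=
  [set M : MF | [forall i : 'I_n, forall j : 'I_n,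
    ((a <= j) && (i < j))%N || (M i j == (i == j)%:R)]].

Lemma unip_tailP M :
  reflect (forall i j : 'I_n, ~~ ((a <= j) && (i < j))%N -> M i j = (i == j)%:R)
          (M \in unip_tail).
Proof.
rewrite inE; apply: (iffP forallP) => [MN i j|MN i]; last first.
  by apply/forallP => j; case: ((a <= j) && (i < j))%N (MN i j) => //= ->.
by have /forallP/(_ j) := MN i; case: ((a <= j) && (i < j))%N => //= /eqP.
Qed.

Lemma unip_tail_diag M i : M \in unip_tail -> M i i = 1.
Proof. by move/unip_tailP/(_ i i); rewrite ltnn andbF eqxx => ->. Qed.

Lemma unip_tail_lower M (i j : 'I_n) : M \in unip_tail -> (j < i)%N -> M i j = 0.
Proof.
move/unip_tailP=> MN lt_ji; rewrite MN; last by rewrite negb_and -leqNgt (ltnW lt_ji) orbT.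
by rewrite eq_sym ord_ltn_eqF.
Qed.

Lemma unip_tail_head M (i j : 'I_n) : M \in unip_tail -> (j < a)%N -> M i j = (i == j)%:R.
Proof. by move/unip_tailP=> MN lt_ja; rewrite MN // negb_and -ltnNge lt_ja. Qed.

Lemma unip_tail1 : 1%:M \in unip_tail.
Proof. by apply/unip_tailP => i j _; rewrite mxE. Qed.

Lemma unip_tailM : {in unip_tail &, forall M1 M2, M1 *m M2 \in unip_tail}.
Proof.
move=> M1 M2 N1 N2; apply/unip_tailP => i j nij; rewrite mxE.
have [lt_ja|le_aj] := ltnP j a.
  rewrite -[RHS](sum_if_eq j); apply: eq_bigr => l _; rewrite (unip_tail_head _ N2) //.
  by case: (eqVneq l j) => [->|_]; rewrite ?mulr0 // mulr1 (unip_tail_head _ N1).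
have le_ji : (j <= i)%N by move: nij; rewrite le_aj -leqNgt.
rewrite -[RHS](sum_if_eq i); apply: eq_bigr => l _.
case: (eqVneq l i) => [->|ne_li].
  by rewrite unip_tail_diag // mul1r (unip_tailP _ N2) // le_aj -leqNgt.
case: (ltngtP l i) => [lt_li|lt_il|/val_inj eq_li].
- by rewrite (unip_tail_lower N1) ?mul0r.
- by rewrite (unip_tail_lower N2) ?mulr0 // (leq_ltn_trans le_ji).
- by rewrite eq_li eqxx in ne_li.
Qed.

Lemma unip_tail_unit : {subset unip_tail <= unitmx}.
Proof.
move=> M MN; rewrite unitmxE -det_tr det_trig.
  by rewrite big1 ?unitr1 // => i _; rewrite mxE unip_tail_diag.
by apply/is_trig_mxP => i j lt_ij; rewrite mxE (unip_tail_lower MN).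
Qed.

Definition unip_nilp m y : MF :=
  \matrix_(i, j) (if (j == m.-1 :> nat) && (i < m.-1)%N then y i else 0).

Lemma unip_mxE m y : unip_mx n m y = 1%:M + unip_nilp m y.
Proof. by apply/matrixP => i j; rewrite !mxE. Qed.

Lemma unip_nilp_opp m y : unip_nilp m (fun i => - y i) = - unip_nilp m y.
Proof. by apply/matrixP => i j; rewrite !mxE; case: ifP; rewrite ?oppr0. Qed.

Lemma unip_nilp_mul m y y' : unip_nilp m y *m unip_nilp m y' = 0.
Proof.
apply/matrixP => i j; rewrite !mxE big1 // => l _; rewrite !mxE.
by case: eqP => [->|_]; rewrite ?ltnn ?andbF ?mulr0 ?mul0r.
Qed.

Lemma invmx_unip_mx m y : invmx (unip_mx n m y) = unip_mx n m (fun i => - y i).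
Proof.
apply: invmx_eq; rewrite !unip_mxE unip_nilp_opp mulmxDl mul1mx mulmxDr mulmx1.
by rewrite mulmxN unip_nilp_mul oppr0 addr0 addrNK.
Qed.

Lemma unip_mx_tail t y : (a <= t)%N -> unip_mx n t.+1 y \in unip_tail.
Proof.
move=> le_at; apply/unip_tailP => i j nij; rewrite mxE /=.
have [jt|] := eqVneq (nat_of_ord j) t; last by rewrite andFb addr0.
by move: nij; rewrite jt le_at /= => /negbTE ->; rewrite addr0.
Qed.

Lemma mul_unip_mx (T : 'I_n) y A i j :
  (unip_mx n T.+1 y *m A) i j = A i j + (if (i < T)%N then y i * A T j else 0).
Proof.
rewrite unip_mxE mulmxDl mul1mx mxE; congr (_ + _).
rewrite mxE -[RHS](sum_if_eq T); apply: eq_bigr => l _; rewrite mxE /=.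
case: (eqVneq l T) => [->|ne_lT]; first by rewrite eqxx /=; case: ifP; rewrite ?mul0r.
by rewrite (inj_eq val_inj) (negbTE ne_lT) mul0r.
Qed.

Lemma unip_tail_peel (T : 'I_n) M : (a <= T)%N -> M \in unip_tail ->
    (forall i j : 'I_n, (T < j)%N -> M i j = (i == j)%:R) ->
  exists y M', [/\ M' \in unip_tail,
    forall i j : 'I_n, (T <= j)%N -> M' i j = (i == j)%:R & M = unip_mx n T.+1 y *m M'].
Proof.
move=> le_aT MN MT; pose y i := mx_at M i T.
have rowT j : M T j = (T == j)%:R.
  case: (eqVneq T j) => [<-|ne_Tj]; first exact: unip_tail_diag.
  case: (ltngtP j T) => [lt_jT|lt_Tj|/val_inj eq_jT]; first exact: unip_tail_lower.
    by rewrite MT // (negbTE ne_Tj).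
  by rewrite eq_jT eqxx in ne_Tj.
exists y, (unip_mx n T.+1 (fun i => - y i) *m M); split.
- by rewrite unip_tailM ?unip_mx_tail.
- move=> i j; rewrite leq_eqVlt mul_unip_mx rowT => /orP[/eqP/val_inj<-|lt_Tj].
    rewrite eqxx mulr1 /y mx_at_ord.
    case: (eqVneq i T) => [->|ne_iT]; first by rewrite ltnn addr0 unip_tail_diag.
    case: (ltngtP i T) => [lt_iT|lt_Ti|/val_inj eq_iT]; first by rewrite subrr.
      by rewrite addr0 (unip_tail_lower MN).
    by rewrite eq_iT eqxx in ne_iT.
  by rewrite MT // (ord_ltn_eqF lt_Tj) mulr0 if_same addr0.
- by rewrite mulmxA -invmx_unip_mx mulmxV ?mul1mx // unip_tail_unit ?unip_mx_tail.
Qed.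

Lemma unip_tail_ind (P : MF -> Prop) :
  P 1%:M -> (forall t y, (a <= t < n)%N -> P (unip_mx n t.+1 y)) ->
  {in unip_tail &, forall M1 M2, P M1 -> P M2 -> P (M1 *m M2)} ->
  {in unip_tail, forall M, P M}.
Proof.
move=> P1 Punip PM M MN.
suff PN s : forall M, M \in unip_tail ->
    (forall i j : 'I_n, (a + s <= j)%N -> M i j = (i == j)%:R) -> P M.
  by apply: (PN (n - a)%N M MN) => i j; have := ltn_ord j; lia.
elim: s => [|s IH] {}M {}MN Ms.
  suff -> : M = 1%:M by [].
  apply/matrixP => i j; rewrite mxE; case: (ltnP j a) => [|le_aj].
    exact: unip_tail_head.
  by apply: Ms; rewrite addn0.
have [lt_n|ge_n] := ltnP (a + s) n; last first.
  by apply: IH => // i j; have := ltn_ord j; lia.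
have [|y [M' [NM' M's ->]]] := @unip_tail_peel (Ordinal lt_n) M (leq_addr _ _) MN.
  by move=> i j lt_j; apply: Ms; rewrite addnS.
apply: PM; rewrite ?unip_mx_tail ?leq_addr //; last exact: IH.
by apply: Punip; rewrite leq_addr.
Qed.

Lemma unip_tailV : {in unip_tail, forall M, invmx M \in unip_tail}.
Proof.
apply: unip_tail_ind => [|t y /andP[le_at _]|M1 M2 N1 N2 V1 V2].
- by rewrite invmx1 unip_tail1.
- by rewrite invmx_unip_mx unip_mx_tail.
- by rewrite invmxM ?unip_tail_unit // unip_tailM.
Qed.

End UnipotentTail.

Arguments unip_tail {F n} a.

Section SuperdiagonalSum.
Variables (F : finFieldType) (n a : nat).
Local Notation MF := 'M[F]_n.
Local Notation N := (@unip_tail F n a).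
Implicit Types (M A : MF) (y : nat -> F).

Definition prev_ord (j : 'I_n) : 'I_n := Ordinal (leq_ltn_trans (leq_pred j) (ltn_ord j)).

Lemma prev_ord_eqF (j : 'I_n) : (0 < j)%N -> (prev_ord j == j) = false.
Proof. by move=> j_gt0; rewrite ord_ltn_eqF //= ltn_predL. Qed.

(* For a character chi of F, chi o sdiag_sum is chi (y_(t-1)) on the copy of
   U_(t+1) with t > a (the Phi^- steps) and trivial on U_(a+1) (the Psi^- step). *)
Definition sdiag_sum M : F := \sum_(j : 'I_n | (a < j)%N) M (prev_ord j) j.

Lemma unip_tailM_sdiag M1 M2 (j : 'I_n) : M1 \in N -> M2 \in N -> (a < j)%N ->
  (M1 *m M2) (prev_ord j) j = M1 (prev_ord j) j + M2 (prev_ord j) j.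
Proof.
move=> N1 N2 lt_aj; have j_gt0 : (0 < j)%N by apply: leq_ltn_trans lt_aj.
set p := prev_ord j; rewrite mxE -[M1 p j](sum_if_eq j) -[M2 p j](sum_if_eq p) -big_split.
have pj : (p == j) = false by apply: prev_ord_eqF.
apply: eq_bigr => l _ /=.
case: (eqVneq l j) => [->|ne_lj]; first by rewrite (unip_tail_diag _ N2) mulr1 eq_sym pj addr0.
case: (eqVneq l p) => [->|ne_lp]; first by rewrite (unip_tail_diag _ N1) mul1r add0r.
rewrite add0r; case: (ltngtP l p) => [lt_lp|lt_pl|/val_inj eq_lp].
- by rewrite (unip_tail_lower N1) ?mul0r.
- rewrite (unip_tail_lower N2) ?mulr0 //.
  by move: lt_pl ne_lj; rewrite /p /= -(inj_eq val_inj) /= => lt_pl /eqP; lia.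
- by rewrite eq_lp eqxx in ne_lp.
Qed.

Lemma sdiag_sumM : {in N &, {morph sdiag_sum : M1 M2 / M1 *m M2 >-> M1 + M2}}.
Proof.
move=> M1 M2 N1 N2; rewrite /sdiag_sum -big_split; apply: eq_bigr => j.
exact: unip_tailM_sdiag.
Qed.

Lemma sdiag_sum1 : sdiag_sum 1%:M = 0.
Proof.
rewrite /sdiag_sum big1 // => j lt_aj; rewrite mxE prev_ord_eqF //.
exact: leq_ltn_trans lt_aj.
Qed.

Lemma sdiag_sum_invmx M : M \in N -> sdiag_sum (invmx M) = - sdiag_sum M.
Proof.
move=> MN; apply/eqP; rewrite -addr_eq0 -sdiag_sumM ?unip_tailV //.
by rewrite mulVmx ?sdiag_sum1 // (unip_tail_unit MN).
Qed.

Lemma sdiag_sum_unip t y : (a <= t < n)%N ->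
  sdiag_sum (unip_mx n t.+1 y) = if (a < t)%N then y t.-1 else 0.
Proof.
case/andP=> le_at lt_tn; pose T := Ordinal lt_tn.
rewrite /sdiag_sum (eq_bigr (fun j => if j == T then y t.-1 else 0)) => [|j lt_aj]; last first.
  have j_gt0 : (0 < j)%N by apply: leq_ltn_trans lt_aj.
  rewrite /unip_mx mxE prev_ord_eqF // add0r /= -(inj_eq val_inj) /=.
  by case: eqP => [jt|//]; rewrite -jt ltn_predL j_gt0.
rewrite -big_mkcondr /=; case: ifP => lt_at.
  by rewrite (big_pred1 T) // => j /=; rewrite andbC; case: eqP => // ->.
by rewrite big_pred0 // => j; case: eqP => [->|] /=; rewrite ?lt_at ?andbF.
Qed.

Lemma unip_tail_avg_data (R : comPzRingType) (chi : F -> R) (c : R) :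
  {morph chi : x y / x + y >-> x * y} -> chi 0 = 1 -> c * #|N|%:R = 1 ->
  twisted_avg_data N (fun g => chi (sdiag_sum g)) c.
Proof.
move=> chiD chi0 cN; split=> //; first exact: unip_tail_unit.
- exact: unip_tailM.
- exact: unip_tailV.
- by rewrite sdiag_sum1.
- by move=> g h Ng Nh /=; rewrite sdiag_sumM // chiD.
Qed.

Lemma emb_mx_id (h : 'M[F]_a) (i j : 'I_n) : ((a <= i) || (a <= j))%N ->
  emb_mx n h i j = (i == j)%:R.
Proof. by move=> le_a; rewrite mxE ifN // negb_and -!leqNgt. Qed.

Lemma mul_emb_mx_row (h : 'M[F]_a) A (i j : 'I_n) : (a <= i)%N ->
  (emb_mx n h *m A) i j = A i j.
Proof.
move=> le_ai; rewrite mxE -[RHS](sum_if_eq i); apply: eq_bigr => l _.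
by rewrite emb_mx_id ?le_ai // eq_sym; case: eqP => [->|_]; rewrite ?mul1r ?mul0r.
Qed.

Lemma mul_mx_emb (h : 'M[F]_a) A : (forall i l : 'I_n, (l < a)%N -> A i l = 0) ->
  A *m emb_mx n h = A.
Proof.
move=> A0; apply/matrixP => i j; rewrite mxE -[RHS](sum_if_eq j); apply: eq_bigr => l _.
case: (ltnP l a) => [lt_la|le_al]; first by rewrite A0 // mul0r; case: eqP => // <-; rewrite A0.
by rewrite emb_mx_id ?le_al //; case: eqP => [->|_]; rewrite ?mulr1 ?mulr0.
Qed.

Lemma mul_mx_emb_col (h : 'M[F]_a) A (i j : 'I_n) : (a <= j)%N ->
  (A *m emb_mx n h) i j = A i j.
Proof.
move=> le_aj; rewrite mxE -[RHS](sum_if_eq j); apply: eq_bigr => l _.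
by rewrite emb_mx_id ?le_aj ?orbT //; case: eqP => [->|_]; rewrite ?mulr1 ?mulr0.
Qed.

Lemma emb_mxM (g h : 'M[F]_a) : (a <= n)%N -> emb_mx n g *m emb_mx n h = emb_mx n (g *m h).
Proof.
move=> le_an; apply/matrixP => i j.
have [lt_ja|le_aj] := ltnP j a; last by rewrite mul_mx_emb_col // !emb_mx_id ?le_aj ?orbT.
have [lt_ia|le_ai] := ltnP i a; last by rewrite mul_emb_mx_row // !emb_mx_id ?le_ai.
rewrite [RHS]mxE lt_ia lt_ja /mx_at !insubT !mxE.
rewrite (eq_bigr (fun l : 'I_n => if (l < a)%N then mx_at g i l * mx_at h l j else 0)).
  rewrite -big_mkcond (big_ord_narrow le_an) /=; apply: eq_bigr => l _.
  rewrite /mx_at !insubT /= => [|lt_la]; first exact: ltn_ord.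
  by have -> : Sub (nat_of_ord l) lt_la = l by apply/val_inj.
move=> l _; rewrite !mxE lt_ia lt_ja /=; case: ifP => // /negbT; rewrite -leqNgt => le_al.
by rewrite (ord_ltn_eqF (leq_trans lt_ia le_al)) mul0r.
Qed.

Lemma emb_mx1 : emb_mx n (1%:M : 'M[F]_a) = 1%:M.
Proof.
apply/matrixP => i j; rewrite !mxE; case: ifP => // /andP[lt_ia lt_ja].
by rewrite /mx_at !insubT mxE.
Qed.

Section Conjugation.
Variable g : 'M[F]_a.
Hypotheses (le_an : (a <= n)%N) (Ug : g \in unitmx).
Local Notation E := (emb_mx n g).

Lemma invmx_emb_mx : invmx E = emb_mx n (invmx g).
Proof. by apply: invmx_eq; rewrite emb_mxM // mulmxV // emb_mx1. Qed.

Lemma emb_mx_unit : E \in unitmx.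
Proof.
have EE' : E *m emb_mx n (invmx g) = 1%:M by rewrite emb_mxM // mulmxV // emb_mx1.
by case: (mulmx1_unit EE').
Qed.

Variable M : MF.
Hypothesis MN : M \in N.

Lemma emb_conjE : E *m M *m invmx E = 1%:M + E *m (M - 1%:M).
Proof.
rewrite -{1}[M](subrK 1%:M) mulmxDr mulmx1 mulmxDl mulmxV ?emb_mx_unit // addrC.
rewrite -mulmxA invmx_emb_mx mul_mx_emb // => i l lt_la.
by rewrite !mxE (unip_tail_head _ MN) // subrr.
Qed.

Lemma emb_conj_row (i j : 'I_n) : (a <= i)%N -> (E *m M *m invmx E) i j = M i j.
Proof. by move=> le_ai; rewrite emb_conjE mxE mul_emb_mx_row // !mxE addrC subrK. Qed.

Lemma emb_conj_head (i j : 'I_n) : (j < a)%N -> (E *m M *m invmx E) i j = (i == j)%:R.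
Proof.
move=> lt_ja; rewrite emb_conjE !mxE big1 ?addr0 // => l _.
by rewrite !mxE (unip_tail_head _ MN) // subrr mulr0.
Qed.

Lemma emb_conj_tail : E *m M *m invmx E \in N.
Proof.
apply/unip_tailP => i j nij; have [lt_ja|le_aj] := ltnP j a; first exact: emb_conj_head.
have le_ji : (j <= i)%N by move: nij; rewrite le_aj -leqNgt.
by rewrite emb_conj_row ?(leq_trans le_aj le_ji) //; move/unip_tailP: MN; apply.
Qed.

Lemma sdiag_sum_emb_conj : sdiag_sum (E *m M *m invmx E) = sdiag_sum M.
Proof. by apply: eq_bigr => j lt_aj; rewrite emb_conj_row //= -ltnS (ltn_predK lt_aj). Qed.

End Conjugation.
End SuperdiagonalSum.

Section Cardinality.
Variables (F : finFieldType) (n a : nat).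
Local Notation free_pos := {x : 'I_n * 'I_n | ((a <= x.2) && (x.1 < x.2))%N}.

Definition unip_tail_of (f : {ffun free_pos -> F}) : 'M[F]_n :=
  \matrix_(i, j) if (insub (i, j) : option free_pos) is Some x then f x else (i == j)%:R.

Lemma unip_tail_of_inj : injective unip_tail_of.
Proof.
move=> f1 f2 eq_f; apply/ffunP => x.
have := congr1 (fun M : 'M[F]_n => M (val x).1 (val x).2) eq_f; rewrite !mxE.
by rewrite -surjective_pairing valK.
Qed.

Lemma unip_tailE : unip_tail a = unip_tail_of @: [set: {ffun free_pos -> F}] :> {set 'M[F]_n}.
Proof.
apply/setP => M; apply/idP/imsetP => [MN|[f _ ->]].
  exists [ffun x : free_pos => M (val x).1 (val x).2] => //.
  apply/matrixP => i j; rewrite mxE; case: insubP => [x _ xE|nij].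
    by rewrite ffunE xE.
  by move/unip_tailP: MN; apply.
by apply/unip_tailP => i j nij; rewrite mxE; case: insubP => [x Px _|//]; rewrite Px in nij.
Qed.

Lemma card_unip_tail : #|@unip_tail F n a| = (#|F| ^ #|{: free_pos}|)%N.
Proof. by rewrite unip_tailE card_imset ?cardsT ?card_ffun //; apply: unip_tail_of_inj. Qed.

End Cardinality.

Lemma card_finField_pchar (F : finFieldType) p : p \in [pchar F] -> exists r, #|F| = (p ^ r)%N.
Proof.
move=> pF; have /abelian.abelem_pgroup pgF := abelian.fin_ring_pchar_abelem pF.
by have [r] := p_natP pgF; rewrite cardsT => ->; exists r.
Qed.

Lemma card_unip_tail_unit (F : finFieldType) (R : comPzRingType) (n a p : nat) :
  p \in [pchar F] -> (exists r : R, p%:R * r = 1) ->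
  exists c : R, c * #|@unip_tail F n a|%:R = 1.
Proof.
move=> pF [r pr1]; have [e Fe] := card_finField_pchar pF.
rewrite card_unip_tail Fe -expnM natrX; set m := (_ * _)%N.
by exists (r ^+ m); rewrite -exprMn mulrC pr1 expr1n.
Qed.

(** * Generators of the kernel of pi ->> pi^(k,chi) *)

Definition unip_gen (F : finFieldType) (n a : nat) (g : 'M[F]_n) : Prop :=
  exists t (y : nat -> F), (a <= t < n)%N /\ g = unip_mx n t.+1 y.

Section DerivativeGenerators.
Variables (F : finFieldType) (R : comPzRingType) (n : nat).
Variables (X : lmodType R) (C : X -> Prop) (act : 'M[F]_n -> X -> X) (chi : F -> R).

Lemma phi_gensP j x :
  phi_gens C act chi j x <-> exists2 j', (j' < j)%N & rel_gens C act (n - j') chi x.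
Proof.
elim: j => [|j IH] /=; first by split=> // -[].
split=> [[/IH[j' lt_j' Hx]|Hx]|[j' lt_j' Hx]]; first by exists j'; rewrite // ltnS ltnW.
  by exists j.
have [lt_j'j|ge_j'j] := ltnP j' j; first by left; apply/IH; exists j'.
by right; have -> : j = j' by lia.
Qed.

Variable k : nat.
Hypothesis hk : (1 <= k <= n)%N.
Local Notation a := (n - k)%N.
Local Notation theta := (fun g => chi (sdiag_sum a g)).
Hypotheses (actP : is_GLaction C act) (chiD : {morph chi : x y / x + y >-> x * y}).
Hypothesis chi0 : chi 0 = 1.

Lemma deriv_gensE x :
  phi_gens C act chi k.-1 x \/ rel_gens C act (n - k.-1) (fun=> 1) x <->
  twisted_gens C act theta (unip_gen a) x.
Proof.
split=> [[/phi_gensP[j lt_jk [y [w [Cw ->]]]]|[y [w [Cw ->]]]]|].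
- have [t [-> lt_at lt_tn]] : exists t, [/\ (n - j)%N = t.+1, (a < t)%N & (t < n)%N].
    by exists (n - j).-1; split; lia.
  exists (unip_mx n t.+1 y), w; split=> //; first by exists t, y; split=> //; lia.
  by rewrite sdiag_sum_unip ?lt_at //; lia.
- have Ek : (n - k.-1)%N = a.+1 by lia.
  exists (unip_mx n a.+1 y), w; rewrite Ek; split=> //; first by exists a, y; split=> //; lia.
  by rewrite sdiag_sum_unip ?ltnn ?chi0 //; lia.
case=> _ [w [[t [y [ht ->]]] Cw ->]]; rewrite sdiag_sum_unip //; case: ifP => lt_at.
  left; apply/phi_gensP; exists (n - t.+1)%N; first lia.
  by exists y, w; split=> //; have -> : (n - (n - t.+1))%N = t.+1 by lia.
right; have -> : t = a by lia.
by exists y, w; rewrite chi0; split=> //; have -> : (n - k.-1)%N = a.+1 by lia.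
Qed.

Lemma twisted_gens_unip_tail x : twisted_gens C act theta (fun g => g \in unip_tail a) x ->
  rspan (twisted_gens C act theta (unip_gen a)) x.
Proof.
case: actP => _ act1 actM actC [g [w [Ng Cw ->]]]; move: g Ng w Cw.
apply: (unip_tail_ind (P := fun g => forall w, C w ->
  rspan (twisted_gens C act theta (unip_gen a)) (act g w - theta g *: w))).
- by move=> w _; rewrite act1 sdiag_sum1 chi0 scale1r subrr; apply: rspan0.
- by move=> t y ht w Cw; apply: rspan_gen; exists (unip_mx n t.+1 y), w; split=> //; exists t, y.
move=> g h Ng Nh IHg IHh w Cw; have [Ug Uh] := (unip_tail_unit Ng, unip_tail_unit Nh).
have -> : act (g *m h) w - theta (g *m h) *: w =
    (act g (act h w) - theta g *: act h w) + theta g *: (act h w - theta h *: w).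
  by rewrite actM // sdiag_sumM // chiD scalerBr scalerA addrA subrK.
by apply: rspan_add; [apply: IHg; apply: actC | apply/rspan_scale/IHh].
Qed.

Lemma deriv_subE x :
  deriv_sub C act chi k x <-> rspan (twisted_gens C act theta (fun g => g \in unip_tail a)) x.
Proof.
split; apply: rspan_trans => y.
  case/deriv_gensE=> _ [w [[t [z [ht ->]]] Cw ->]]; apply: rspan_gen.
  by exists (unip_mx n t.+1 z), w; split=> //; rewrite unip_mx_tail //; case/andP: ht.
move/twisted_gens_unip_tail; apply: rspan_trans => z /deriv_gensE.
exact: rspan_gen.
Qed.

End DerivativeGenerators.

(** * Duality *)

Section DualDerivative.
Variables (F : finFieldType) (R : comPzRingType) (n k : nat).
Variables (V : lmodType R) (rho : 'M[F]_n -> V -> V) (psi : F -> R) (c : R).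
Hypotheses (rhoP : is_GLrep rho) (hk : (1 <= k <= n)%N).
Hypotheses (psiD : {morph psi : x y / x + y >-> x * y}) (psi0 : psi 0 = 1).
Local Notation a := (n - k)%N.
Local Notation N := (@unip_tail F n a).
Hypothesis cN : c * #|N|%:R = 1.
Local Notation psi' := (fun x => psi (- x)).
Local Notation theta := (fun g => psi (sdiag_sum a g)).
Local Notation theta' := (fun g => psi' (sdiag_sum a g)).
Local Notation e := (twisted_avg N theta c rho).

Let psi'D : {morph psi' : x y / x + y >-> x * y}.
Proof. by move=> x y; rewrite opprD psiD. Qed.

Let psi'0 : psi' 0 = 1.
Proof. by rewrite /= oppr0. Qed.

Let NP := unip_tail_avg_data psiD psi0 cN.
Let NP' := unip_tail_avg_data psi'D psi'0 cN.
Let rhoA := is_GLaction_rep rhoP.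
Let dualA := is_GLaction_dual rhoP.

Lemma twisted_avg_eq0_deriv v : e v = 0 <-> deriv_sub (fun=> True) rho psi k v.
Proof.
exact: iff_trans (twisted_avg_eq0 NP rhoA I) (iff_sym (deriv_subE hk rhoA psiD psi0 v)).
Qed.

Lemma sub_twisted_avg_deriv v : deriv_sub (fun=> True) rho psi k (v - e v).
Proof. exact/(deriv_subE hk rhoA psiD psi0)/(rspan_sub_twisted_avg NP). Qed.

Lemma dual_twisted_avg_eq0_deriv (l : V -> R^o) : lin_form l ->
  twisted_avg N theta' c (dual_act rho) l = 0 <->
  deriv_sub (@lin_form R V) (dual_act rho) psi' k l.
Proof.
move=> lL; apply: iff_trans (twisted_avg_eq0 NP' dualA lL) _.
exact: iff_sym (deriv_subE hk dualA psi'D psi'0 l).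
Qed.

Lemma twisted_avg_emb_mx (g : 'M[F]_a) v : g \in unitmx ->
  e (rho (emb_mx n g) v) = rho (emb_mx n g) (e v).
Proof.
move=> Ug; have le_an : (a <= n)%N := leq_subr k n.
apply: (twisted_avg_conj NP rhoA); first exact: emb_mx_unit.
  by move=> M MN; apply: emb_conj_tail.
by move=> M MN /=; rewrite sdiag_sum_emb_conj.
Qed.

Theorem dual_derivative_iso : dual_deriv_iso rho psi psi' k.
Proof.
exists (fun l v => l (e v)); split.
- move=> l lL; split=> [x u v|v /twisted_avg_eq0_deriv->]; last exact: lin0 lL.
  by rewrite /= (twisted_avg_linear NP rhoA) lL.
- by [].
- move=> g l Ug lL; apply/funext => v; rewrite /dual_act invmx_emb_mx ?leq_subr //.
  by rewrite twisted_avg_emb_mx ?unitmx_inv.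
- move=> l' [lL' l'W]; exists l'; split=> //; apply/funext => v.
  by have /eqP := l'W _ (sub_twisted_avg_deriv v); rewrite (linB lL') subr_eq0 => /eqP.
move=> l lL; have theta'E : {in N, forall g, theta' g = theta (invmx g)}.
  by move=> g Ng /=; rewrite sdiag_sum_invmx.
by rewrite -(twisted_avg_dual rho NP theta'E lL) dual_twisted_avg_eq0_deriv.
Qed.

End DualDerivative.

Lemma Zp_zeta_unity (R : comPzRingType) (p : nat) (zeta : R) :
  Zp_zeta_algebra p zeta -> zeta ^+ p = 1.
Proof. by case=> _ zeta_sum; apply/eqP; rewrite -subr_eq0 subrX1 zeta_sum mulr0. Qed.

Section PsiR.
Variables (F : finFieldType) (R : comPzRingType) (p : nat) (zeta : R).
Variable f : {additive F -> 'Z_p}.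

Lemma psiRD : prime p -> zeta ^+ p = 1 -> {morph psiR zeta f : x y / x + y >-> x * y}.
Proof.
move=> pr_p zeta_p x y; rewrite /psiR raddfD.
have zeta_p' : zeta ^+ (Zp_trunc p).+2 = 1 by rewrite Zp_cast ?prime_gt1.
have -> : nat_of_ord (f x + f y) = ((f x + f y) %% (Zp_trunc p).+2)%N by [].
by rewrite expr_mod // exprD.
Qed.

Lemma psiR0 : psiR zeta f 0 = 1.
Proof. by rewrite /psiR raddf0. Qed.

End PsiR.

Theorem corollary2p6 (p : nat) (F : finFieldType) (R : comPzRingType)
    (zeta : R) (f : {additive F -> 'Z_p})
    (V : lmodType R) (n : nat) (rho : 'M[F]_n -> V -> V) (k : nat) :
  prime p -> p \in [pchar F] ->
  noetherian_ring R -> Zp_zeta_algebra p zeta ->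
  (exists a : F, f a != 0) ->
  is_GLrep rho ->
  (1 <= k <= n)%N ->
  dual_deriv_iso rho (psiR zeta f) (psiR_inv zeta f) k.
Proof.
move=> pr_p pF _ zetaP _ rhoP hk.
have [c cN] := card_unip_tail_unit n (n - k) pF (proj1 zetaP).
exact: dual_derivative_iso rhoP hk (psiRD f pr_p (Zp_zeta_unity zetaP)) (psiR0 _ f) cN.
Qed.
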